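(* Let $K,N\in\mathbb{N}$ with $N\ge2K$, and suppose $\|\nabla f(w;z)\|\le G$ for all $w\in\mathcal{K}$, $z\in\Omega$. Then for every $\delta>N\,d_{\mathrm{mix}}(K)$ and every $w_t\in\mathcal{K}$ that is $\mathcal{F}_{t-1}$-measurable, \[ \mathbb{P}_{t-1}\Big(\Big\|\frac1N\sum_{i=1}^N\nabla f(w_t;z_t^{(i)})-\nabla F(w_t)\Big\|\le12G\sqrt{\tfrac KN}\Big(1+\sqrt{\log(K/\tilde\delta)}\Big)+\frac{6GK}{N}\Big)\ge1-\delta, \] where $\tilde\delta=\delta-N\,d_{\mathrm{mix}}(K)$.
   Context: Let $\Omega$ be a finite set and $(z_k)_{k\ge1}$ an ergodic time-homogeneous Markov chain on $\Omega$ (arbitrary, not necessarily stationary, initial distribution) with stationary distribution $\mu$. For probability measures $P,Q$ on $\Omega$, $\|P-Q\|_{TV}=\sup_A|P(A)-Q(A)|$; $P^s(z,\cdot)$ is the law of $z_{s+1}$ given $z_1=z$, and $d_{\mathrm{mix}}(s)=\sup_z\|P^s(z,\cdot)-\mu\|_{TV}$. $\mathcal{K}\subseteq\mathbb{R}^d$; $f(\cdot;z)$ is differentiable and $F(w)=\mathbb{E}_{z\sim\mu}[f(w;z)]$. Samples are grouped by iterations: positive integers $N_1,N_2,\dots$ are drawn independently of the chain (each $N_s=2^{J_s}$ with $\mathbb{P}(J_s=j)=2^{-j}$, $j\ge1$, independently), and $z_t^{(i)}=z_{S_{t-1}+i}$ for $i\ge1$, where $S_{t-1}=N_1+\dots+N_{t-1}$.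 $\mathcal{F}_{t-1}$ is the $\sigma$-field generated by $N_1,\dots,N_{t-1}$ and the samples $z_s^{(i)}$, $s\le t-1$, $i\le N_s$; $\mathbb{P}_{t-1}$ is conditional probability given $\mathcal{F}_{t-1}$. $\log$ is the natural logarithm. *)

From HB Require Import structures.
From mathcomp Require Import all_boot all_order all_algebra.
From mathcomp Require Import all_classical all_reals all_analysis.
Set Implicit Arguments. Unset Strict Implicit. Unset Printing Implicit Defensive.
Import Order.TTheory GRing.Theory Num.Theory.
Import numFieldNormedType.Exports.
Local Open Scope ring_scope.

Section Defs.
Variable R : realType.
Variable Omega : finType.

(* transition kernel P : Omega -> Omega -> R ; P x y = P(z_{k+1} = y | z_k = x) *)
Definition is_distr (p : Omega -> R) :=
  (forall x, 0 <= p x) /\ \sum_x p x = 1.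

Definition stochastic (P : Omega -> Omega -> R) :=
  forall x, is_distr (P x).

Fixpoint Ppow (P : Omega -> Omega -> R) (s : nat) : Omega -> Omega -> R :=
  match s with
  | 0 => fun x y => (x == y)%:R
  | s'.+1 => fun x y => \sum_u Ppow P s' x u * P u y
  end.

Definition irreducible (P : Omega -> Omega -> R) :=
  forall x y, exists k, 0 < Ppow P k x y.

Definition aperiodic (P : Omega -> Omega -> R) :=
  forall x (d : nat), (forall k, (0 < k)%N -> 0 < Ppow P k x x -> (d %| k)%N) -> d = 1%N.

Definition ergodic (P : Omega -> Omega -> R) := irreducible P /\ aperiodic P.

Definition stationary (P : Omega -> Omega -> R) (mu : Omega -> R) :=
  is_distr mu /\ forall y, \sum_x mu x * P x y = mu y.

Definition tv (p q : Omega -> R) : R :=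
  \big[Num.max/0]_(A : {set Omega}) `|\sum_(x in A) p x - \sum_(x in A) q x|.

Definition dmix (P : Omega -> Omega -> R) (mu : Omega -> R) (s : nat) : R :=
  \big[Num.max/0]_(z : Omega) tv (Ppow P s z) mu.

Fixpoint path_aux (P : Omega -> Omega -> R) (z : Omega) (s : seq Omega) : R :=
  match s with
  | [::] => 1
  | z' :: s' => P z z' * path_aux P z' s'
  end.

Definition path_prob (mu0 : Omega -> R) (P : Omega -> Omega -> R) (s : seq Omega) : R :=
  match s with
  | [::] => 1
  | z :: s' => mu0 z * path_aux P z s'
  end.

End Defs.

(* law of N_s = 2^{J_s}, P(J_s = j) = 2^{-j}, j >= 1: P(N_s = n) = 1/n if n = 2^j, j >= 1 *)
Definition is_pow2 (n : nat) : bool := [exists j : 'I_n.+1, (0 < j)%N && (n == 2 ^ j)%N].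

Definition pN (R : realType) (n : nat) : R := if is_pow2 n then n%:R^-1 else 0.

Definition pNs (R : realType) (ns : seq nat) : R := \prod_(n <- ns) pN R n.

Definition eucl_norm (R : realType) (d : nat) (v : 'rV[R]_d) : R :=
  Num.sqrt (\sum_(i < d) v ord0 i ^+ 2).

Definition dotp (R : realType) (d : nat) (u v : 'rV[R]_d) : R :=
  \sum_(i < d) u ord0 i * v ord0 i.

Definition Fpop (R : realType) (Omega : finType) (d : nat)
  (mu : Omega -> R) (f : Omega -> 'rV[R]_d -> R) : 'rV[R]_d -> R :=
  fun w => \sum_z mu z * f z w.

(* Conditional probability P_{t-1}(A) on the atom of F_{t-1} given by
   N_1..N_{t-1} = ns and (z_1, ..., z_{S_{t-1}}) = xs; the event A depends on
   the next N samples (z_t^{(1)}, ..., z_t^{(N)}) = y. *)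
Definition condP (R : realType) (Omega : finType) (mu0 : Omega -> R)
  (P : Omega -> Omega -> R) (ns : seq nat) (xs : seq Omega) (N : nat)
  (A : N.-tuple Omega -> bool) : R :=
  (pNs R ns * \sum_(y : N.-tuple Omega | A y) path_prob mu0 P (xs ++ y))
  / (pNs R ns * path_prob mu0 P xs).

(* Given F_{t-1}, the next block is the chain started one step after the last
   observed state, and grad F = E_mu grad f, so it suffices to bound the
   deviation of an empirical mean of g along a Markov chain.  Split the N
   positions into the K residue classes modulo K.  Along one class the chain
   moves with kernel P^K, and the centred class sum is a martingale with
   increments bounded by 2G plus a drift of at most 2G d_mix(K) per step.
   Controlling E exp(lam |M|^2) one step at a time (exp y <= 1 + y + 2 y^2 on
   the cross term) gives each martingale a tail delta/K at the level
   sqrt(128 G^2 (N/K) (log(K/delta) + 1/16)); a union bound over the classes,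
   with N d_mix(K) < delta < 1 for the drift, gives the bound with log(K/delta),
   which is below the one with log(K/delta~). *)

From HB Require Import structures.
From mathcomp Require Import all_boot all_order all_algebra.
From mathcomp Require Import all_classical all_reals all_analysis.
From mathcomp Require Import ring lra zify.
Import Order.TTheory GRing.Theory Num.Theory.
Import numFieldNormedType.Exports.
Local Open Scope ring_scope.

Set Implicit Arguments. Unset Strict Implicit. Unset Printing Implicit Defensive.

Section SumSeq.
Variables (R : numDomainType) (T : finType).
Implicit Types (F H : seq T -> R).

Fixpoint sumseq (n : nat) F : R :=
  if n is n'.+1 then \sum_x sumseq n' (fun s => F (x :: s)) else F [::].

Lemma eq_sumseq n F H : (forall s, size s = n -> F s = H s) ->
  sumseq n F = sumseq n H.
Proof.
elim: n F H => [|n IH] F H FH /=; first exact: FH.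
by apply: eq_bigr => x _; apply: IH => s sz; apply: FH; rewrite /= sz.
Qed.

Lemma ler_sumseq n F H : (forall s, size s = n -> F s <= H s) ->
  sumseq n F <= sumseq n H.
Proof.
elim: n F H => [|n IH] F H FH /=; first exact: FH.
by apply: ler_sum => x _; apply: IH => s sz; apply: FH; rewrite /= sz.
Qed.

Lemma sumseqZ n c F : sumseq n (fun s => c * F s) = c * sumseq n F.
Proof.
elim: n F => [|n IH] F //=; rewrite mulr_sumr; apply: eq_bigr => x _; exact: IH.
Qed.

Lemma sumseq_sumr n m (F : 'I_m -> seq T -> R) :
  sumseq n (fun s => \sum_(r < m) F r s) = \sum_(r < m) sumseq n (F r).
Proof.
elim: n F => [|n IH] F //=; under eq_bigr do rewrite IH.
by rewrite exchange_big.
Qed.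

Lemma sumseq_cat m n F :
  sumseq (m + n) F = sumseq m (fun a => sumseq n (fun b => F (a ++ b))).
Proof. by elim: m F => [|m IH] F //=; apply: eq_bigr => x _; rewrite IH. Qed.

Lemma sum_tuple_sumseq n F : \sum_(t : n.-tuple T) F t = sumseq n F.
Proof.
elim: n F => [|n IH] F /=.
  rewrite (big_pred1 [tuple]) //= => t; apply/esym/eqP/val_inj.
  by rewrite /= (size0nil (size_tuple t)).
rewrite (reindex (fun p : T * n.-tuple T => [tuple of p.1 :: p.2])) /=.
  rewrite -(pair_bigA _ (fun x (t : n.-tuple T) => F (x :: t))) /=.
  by apply: eq_bigr => x _; rewrite -IH.
exists (fun t : n.+1.-tuple T => (thead t, [tuple of behead t])).
  by move=> [x t] _ /=; congr (_, _); apply: val_inj.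
by move=> t _; apply: val_inj => /=; rewrite [in RHS](tuple_eta t).
Qed.

End SumSeq.

Section MarkovPaths.
Variables (R : realType) (T : finType) (P : T -> T -> R).
Hypothesis HP : stochastic P.

Lemma path_aux_cat z p q :
  path_aux P z (p ++ q) = path_aux P z p * path_aux P (last z p) q.
Proof. by elim: p z => [|x p IH] z /=; rewrite ?mul1r // IH mulrA. Qed.

Lemma path_aux_ge0 z p : 0 <= path_aux P z p.
Proof. by elim: p z => [|x p IH] z //=; rewrite mulr_ge0 //; case: (HP z). Qed.

Lemma stochastic_Ppow n : stochastic (Ppow P n).
Proof.
move=> x; elim: n => [|n [IH0 IH1]] /=.
  split=> [y|]; first by rewrite ler0n.
  by rewrite (bigD1 x) //= eqxx big1 ?addr0 // => y /negbTE; rewrite eq_sym => ->.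
split=> [y|]; first by apply: sumr_ge0 => u _; rewrite mulr_ge0 //; case: (HP u).
rewrite exchange_big /= -IH1; apply: eq_bigr => u _.
by rewrite -mulr_sumr; case: (HP u) => _ ->; rewrite mulr1.
Qed.

Lemma sumseq_path_last n z (h : T -> R) :
  sumseq n (fun s => path_aux P z s * h (last z s)) = \sum_y Ppow P n z y * h y.
Proof.
elim: n h => [|n IH] h.
  rewrite /= mul1r (bigD1 z) //= eqxx mul1r big1 ?addr0 // => y /negbTE.
  by rewrite eq_sym => ->; rewrite mul0r.
rewrite -addn1 sumseq_cat.
pose h1 u := \sum_x P u x * h x.
rewrite (eq_sumseq (H := fun a => path_aux P z a * h1 (last z a))); last first.
  move=> a _ /=; rewrite mulr_sumr; apply: eq_bigr => x _.
  by rewrite path_aux_cat cats1 last_rcons /= mulr1 mulrA.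
rewrite IH addn1 /= /h1; under [RHS]eq_bigr do rewrite mulr_suml.
rewrite exchange_big /=; apply: eq_bigr => u _; rewrite mulr_sumr.
by apply: eq_bigr => x _; rewrite mulrA.
Qed.

Lemma sumseq_path_aux n z : sumseq n (path_aux P z) = 1.
Proof.
have := sumseq_path_last n z (fun _ => 1).
under eq_bigr do rewrite mulr1.
by case: (stochastic_Ppow n z) => _ -> <-; apply: eq_sumseq => s _; rewrite mulr1.
Qed.

Section InitialLaw.
Variable nu : T -> R.
Hypothesis Hnu : is_distr nu.

Lemma path_prob_ge0 s : 0 <= path_prob nu P s.
Proof.
by case: s => [|x s] //=; rewrite mulr_ge0 ?path_aux_ge0 //; case: Hnu.
Qed.

Lemma sumseq_path_prob n : sumseq n.+1 (path_prob nu P) = 1.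
Proof.
case: Hnu => _ <- /=; apply: eq_bigr => x _.
by rewrite sumseqZ sumseq_path_aux mulr1.
Qed.

End InitialLaw.

Definition next_law (mu0 : T -> R) (xs : seq T) : T -> R :=
  if xs is x :: xs' then P (last x xs') else mu0.

Lemma next_law_distr mu0 xs : is_distr mu0 -> is_distr (next_law mu0 xs).
Proof. by case: xs => [|x xs] //= _; exact: HP. Qed.

Lemma path_prob_cat mu0 xs ys :
  path_prob mu0 P (xs ++ ys) = path_prob mu0 P xs * path_prob (next_law mu0 xs) P ys.
Proof.
case: xs => [|x xs] /=; first by rewrite mul1r.
case: ys => [|y ys] /=; first by rewrite cats0 mulr1.
by rewrite path_aux_cat /= mulrA.
Qed.

End MarkovPaths.

Section ChainExpectation.
Variables (R : realType) (T : finType) (Q : T -> T -> R).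

Definition chainE n z (H : seq T -> R) :=
  sumseq n (fun zs => path_aux Q z zs * H zs).

Lemma chainES n z H :
  chainE n.+1 z H = \sum_y Q z y * chainE n y (fun zs => H (y :: zs)).
Proof.
rewrite /chainE /=; apply: eq_bigr => y _; rewrite -sumseqZ.
by apply: eq_sumseq => s _; rewrite mulrA.
Qed.

Lemma chainEZ n z a H : chainE n z (fun zs => a * H zs) = a * chainE n z H.
Proof. by rewrite /chainE -sumseqZ; apply: eq_sumseq => s _; rewrite mulrCA. Qed.

Lemma ler_chainE n z H1 H2 : stochastic Q ->
  (forall zs, H1 zs <= H2 zs) -> chainE n z H1 <= chainE n z H2.
Proof.
move=> HQ H12; apply: ler_sumseq => s _; apply: ler_wpM2l => //.
exact: path_aux_ge0.
Qed.

End ChainExpectation.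

Section Subsampling.
Variables (T : finType) (K : nat).

Fixpoint block_lasts (z : T) (n : nat) (q : seq T) : seq T :=
  if n is n'.+1 then
    let y := last z (take K q) in y :: block_lasts y n' (drop K q)
  else [::].

Definition subsample (r n : nat) (s : seq T) : seq T :=
  if s is x :: s' then
    let z := last x (take r s') in z :: block_lasts z n (drop r s')
  else [::].

Hypothesis K_gt0 : (0 < K)%N.

Lemma block_lasts_nth z n q x0 : (n * K <= size q)%N ->
  block_lasts z n q = [seq nth x0 q (j * K + K.-1) | j <- iota 0 n].
Proof.
elim: n z q => [|n IH] z q //= Hs.
have HK : (K <= size q)%N by move: Hs; rewrite mulSn; lia.
congr (_ :: _).
  rewrite (last_nth x0) size_take_min (minn_idPl HK).
  have -> : K = K.-1.+1 by lia.
  by rewrite /= nth_take.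
rewrite (IH _ (drop K q)); last by rewrite size_drop; move: Hs; rewrite mulSn; lia.
rewrite -(addn0 1%N) iotaDl -map_comp; apply: eq_map => j /=.
by rewrite nth_drop; congr nth; lia.
Qed.

Lemma subsample_nth r n s x0 : (r + n * K < size s)%N ->
  subsample r n s = [seq nth x0 s (r + j * K) | j <- iota 0 n.+1].
Proof.
case: s => [|x s'] //= Hs; congr (_ :: _).
  rewrite (last_nth x0) size_take_min (minn_idPl _); last by lia.
  by rewrite -[x :: take r s']/(take r.+1 (x :: s')) nth_take // addn0.
rewrite (@block_lasts_nth _ n (drop r s') x0); last by rewrite size_drop; lia.
rewrite -(addn0 1%N) iotaDl -map_comp; apply: eq_map => j /=.
by rewrite nth_drop (_ : (r + (1 + j) * K = (r + (j * K + K.-1)).+1)%N) //; lia.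
Qed.

Variables (R : realType) (P : T -> T -> R).
Hypothesis HP : stochastic P.

Lemma sumseq_block_lasts n t z (H : seq T -> R) :
  sumseq (n * K + t) (fun q => path_aux P z q * H (block_lasts z n q)) =
  chainE (Ppow P K) n z H.
Proof.
elim: n z H => [|n IH] z H.
  rewrite mul0n add0n /chainE /= mul1r.
  rewrite (eq_sumseq (H := fun q => H [::] * path_aux P z q)) => [|s _]; last first.
    by rewrite mulrC.
  by rewrite sumseqZ sumseq_path_aux ?mulr1.
rewrite mulSn -addnA sumseq_cat chainES.
rewrite -(sumseq_path_last P _ _ (fun y => chainE _ n y (fun zs => H (y :: zs)))).
apply: eq_sumseq => a Ha; rewrite -IH -sumseqZ; apply: eq_sumseq => b _ /=.
by rewrite take_size_cat // drop_size_cat // path_aux_cat mulrA.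
Qed.

Lemma sumseq_subsample (nu : T -> R) r n t (H : seq T -> R) :
  sumseq (r + (n * K + t)).+1 (fun s => path_prob nu P s * H (subsample r n s)) =
  \sum_x nu x * \sum_y Ppow P r x y * chainE (Ppow P K) n y (fun zs => H (y :: zs)).
Proof.
rewrite /=; apply: eq_bigr => x _; rewrite sumseq_cat.
rewrite -(sumseq_path_last P _ _ (fun y => chainE _ n y (fun zs => H (y :: zs)))).
rewrite -sumseqZ; apply: eq_sumseq => a Ha.
rewrite -(sumseq_block_lasts _ t) -!sumseqZ; apply: eq_sumseq => b _ /=.
by rewrite take_size_cat // drop_size_cat // path_aux_cat !mulrA.
Qed.

End Subsampling.

Lemma sum_ord_blocks (V : nmodType) m K (F : nat -> V) :
  \sum_(i < m * K) F i = \sum_(j < m) \sum_(r < K) F (j * K + r)%N.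
Proof.
elim: m => [|m IH]; first by rewrite mul0n !big_ord0.
by rewrite big_ord_recr /= -IH mulSnr big_split_ord.
Qed.

Lemma sum_ord_residues (V : nmodType) N K (F : nat -> V) : (0 < K <= N)%N ->
  \sum_(i < N) F i =
  \sum_(r < K) \sum_(j < ((N.-1 - r) %/ K).+1) F (r + j * K)%N.
Proof.
case/andP=> K0 KN.
rewrite (big_ord_widen (N * K) F); last by rewrite leq_pmulr.
rewrite big_mkcond (sum_ord_blocks N K (fun i => if (i < N)%N then F i else 0)).
rewrite exchange_big /=; apply: eq_bigr => r _.
rewrite (big_ord_widen N (fun j => F (r + j * K)%N)); last first.
  by have := leq_div (N.-1 - r) K; lia.
rewrite [RHS]big_mkcond; apply: eq_bigr => j _.
have -> : (j < ((N.-1 - r) %/ K).+1)%N = (j * K + r < N)%N.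
  by rewrite ltnS leq_divRL //; have := ltn_ord r; lia.
by case: ifP => //; rewrite addnC.
Qed.

Section Euclidean.
Variables (R : realType) (d : nat).
Implicit Types u v : 'rV[R]_d.

Definition sqnorm v := \sum_(i < d) v ord0 i ^+ 2.

Lemma sqnorm_ge0 v : 0 <= sqnorm v.
Proof. by apply: sumr_ge0 => i _; rewrite sqr_ge0. Qed.

Lemma eucl_norm_ge0 v : 0 <= eucl_norm v.
Proof. exact: sqrtr_ge0. Qed.

Lemma eucl_norm_sq v : eucl_norm v ^+ 2 = sqnorm v.
Proof. by rewrite sqr_sqrtr // sqnorm_ge0. Qed.

Lemma sqnorm0 : sqnorm 0 = 0.
Proof. by rewrite /sqnorm big1 // => i _; rewrite mxE expr0n. Qed.

Lemma eucl_norm0 : eucl_norm (0 : 'rV[R]_d) = 0.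
Proof. by rewrite /eucl_norm -/(sqnorm 0) sqnorm0 sqrtr0. Qed.

Lemma sqnormD u v : sqnorm (u + v) = sqnorm u + 2 * dotp u v + sqnorm v.
Proof.
rewrite /sqnorm /dotp mulr_sumr -!big_split /=; apply: eq_bigr => i _.
by rewrite mxE; ring.
Qed.

Lemma sqnormZ c v : sqnorm (c *: v) = c ^+ 2 * sqnorm v.
Proof. by rewrite /sqnorm mulr_sumr; apply: eq_bigr => i _; rewrite mxE exprMn. Qed.

Lemma eucl_normZ c v : eucl_norm (c *: v) = `|c| * eucl_norm v.
Proof.
by rewrite /eucl_norm -!/(sqnorm _) sqnormZ sqrtrM ?sqr_ge0 // sqrtr_sqr.
Qed.

Lemma eucl_normN v : eucl_norm (- v) = eucl_norm v.
Proof. by rewrite -scaleN1r eucl_normZ normrN normr1 mul1r. Qed.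

Lemma dotpC u v : dotp u v = dotp v u.
Proof. by apply: eq_bigr => i _; rewrite mulrC. Qed.

Lemma dotpNl u v : dotp (- u) v = - dotp u v.
Proof. by rewrite /dotp -sumrN; apply: eq_bigr => i _; rewrite mxE mulNr. Qed.

Lemma sqnorm_eq0_dotp u v : sqnorm u = 0 -> dotp u v = 0.
Proof.
move=> /eqP; rewrite psumr_eq0 => [/allP u0|i _]; last by rewrite sqr_ge0.
apply: big1 => i _.
have : u ord0 i ^+ 2 == 0 by apply: (implyP (u0 i (mem_index_enum _))).
by rewrite sqrf_eq0 => /eqP ->; rewrite mul0r.
Qed.

Lemma cauchy_schwarz u v : dotp u v <= eucl_norm u * eucl_norm v.
Proof.
set a := eucl_norm u; set b := eucl_norm v.
have [a0 b0] : 0 <= a /\ 0 <= b by split; apply: eucl_norm_ge0.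
have [/eqP|ab0] := eqVneq (a * b) 0.
  rewrite mulf_eq0 => /orP[] /eqP/(congr1 (fun x => x ^+ 2));
    rewrite eucl_norm_sq expr0n /= => /sqnorm_eq0_dotp.
    by move->; rewrite mulr_ge0.
  by rewrite dotpC => ->; rewrite mulr_ge0.
have expand : sqnorm (b *: u - a *: v) = 2 * (a * b) * (a * b - dotp u v).
  rewrite sqnormD -scaleNr !sqnormZ -!eucl_norm_sq -/a -/b.
  have -> : dotp (b *: u) (- a *: v) = - (a * b) * dotp u v.
    rewrite /dotp mulr_sumr; apply: eq_bigr => i _; rewrite !mxE; ring.
  ring.
have abp : 0 < 2 * (a * b) by rewrite mulr_gt0 // lt0r ab0 mulr_ge0.
by have := sqnorm_ge0 (b *: u - a *: v); rewrite expand pmulr_rge0 // subr_ge0.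
Qed.

Lemma normr_dotp_le u v : `|dotp u v| <= eucl_norm u * eucl_norm v.
Proof.
rewrite ler_norml cauchy_schwarz andbT lerNl -dotpNl.
by rewrite -(eucl_normN u) cauchy_schwarz.
Qed.

Lemma eucl_normD u v : eucl_norm (u + v) <= eucl_norm u + eucl_norm v.
Proof.
rewrite -(ler_pXn2r (n := 2)) ?nnegrE ?addr_ge0 ?eucl_norm_ge0 //.
rewrite eucl_norm_sq sqnormD sqrrD !eucl_norm_sq lerD2r lerD2l.
by have := cauchy_schwarz u v; rewrite mulr2n mulrDl mul1r; lra.
Qed.

Lemma eucl_norm_sum (I : Type) (r : seq I) (Pr : pred I) (F : I -> 'rV[R]_d) :
  eucl_norm (\sum_(i <- r | Pr i) F i) <= \sum_(i <- r | Pr i) eucl_norm (F i).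
Proof.
apply: (big_ind2 (fun x y => eucl_norm x <= y)) => //; first by rewrite eucl_norm0.
by move=> x1 x2 y1 y2 h1 h2; apply: le_trans (eucl_normD _ _) (lerD h1 h2).
Qed.

Lemma eucl_norm_comb_le (T : finType) (p : T -> R) (V : T -> 'rV[R]_d) c :
  (forall z, eucl_norm (V z) <= c) ->
  eucl_norm (\sum_z p z *: V z) <= (\sum_z `|p z|) * c.
Proof.
move=> Vc; apply: le_trans (eucl_norm_sum _ _ _) _; rewrite mulr_suml.
by apply: ler_sum => z _; rewrite eucl_normZ ler_wpM2l.
Qed.

Definition vmean (T : finType) (p : T -> R) (V : T -> 'rV[R]_d) := \sum_z p z *: V z.

Lemma eucl_norm_vmean_le (T : finType) (p : T -> R) (V : T -> 'rV[R]_d) c :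
  is_distr p -> (forall z, eucl_norm (V z) <= c) -> eucl_norm (vmean p V) <= c.
Proof.
case=> p0 p1 Vc; apply: le_trans (eucl_norm_comb_le _ Vc) _.
by rewrite (eq_bigr _ (fun z _ => ger0_norm (p0 z))) p1 mul1r.
Qed.

Lemma dotp_vmean (T : finType) (p : T -> R) u (V : T -> 'rV[R]_d) :
  dotp u (vmean p V) = \sum_z p z * dotp u (V z).
Proof.
rewrite /dotp /vmean; under [RHS]eq_bigr do rewrite mulr_sumr.
rewrite exchange_big /=; apply: eq_bigr => i _.
rewrite summxE mulr_sumr; apply: eq_bigr => z _.
by rewrite mxE; ring.
Qed.

Lemma dotp0r u : dotp u 0 = 0.
Proof. by apply: big1 => i _; rewrite mxE mulr0. Qed.

End Euclidean.

Lemma expR_le_quad (R : realType) (y : R) : y <= 1 / 2 ->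
  expR y <= 1 + y + 2 * y ^+ 2.
Proof.
move=> y_le; have y_lt1 : 0 < 1 - y by lra.
have -> : expR y = (expR (- y))^-1 by rewrite expRN invrK.
apply: (@le_trans _ _ (1 - y)^-1).
  by rewrite lef_pV2 ?posrE ?expR_gt0 //; have := expR_ge1Dx (- y); rewrite addrC.
rewrite -[(1 - y)^-1]mul1r ler_pdivrMr //.
have : 0 <= y ^+ 2 * (1 - 2 * y) by rewrite mulr_ge0 ?sqr_ge0 //; lra.
nra.
Qed.

Section SqnormMgf.
Variables (R : realType) (d : nat).

(* Expand |U + V|^2: the cross term y = 2 a <U, V> has mean zero and
   |y| <= 1/2, where exp y <= 1 + y + 2 y^2. *)
Lemma mgf_sqnorm_step (T : finType) (p : T -> R) (V : T -> 'rV[R]_d) U a c :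
  is_distr p -> vmean p V = 0 ->
  (forall z, eucl_norm (V z) <= c) -> 0 <= a -> 0 <= c ->
  4 * a * eucl_norm U * c <= 1 ->
  \sum_z p z * expR (a * sqnorm (U + V z)) <=
  expR ((a + 8 * a ^+ 2 * c ^+ 2) * sqnorm U + a * c ^+ 2).
Proof.
move=> [p0 p1] pV Vc a0 c0 small.
set b := 2 * a * eucl_norm U * c.
set y := fun z => 2 * a * dotp U (V z).
have nU0 := eucl_norm_ge0 U.
have b_le : b <= 1 / 2 by rewrite /b; lra.
have y_le z : `|y z| <= b.
  rewrite /y /b normrM ger0_norm ?mulr_ge0 // -!mulrA !ler_wpM2l //.
  by apply: le_trans (normr_dotp_le _ _) _; rewrite ler_wpM2l.
have pointwise z : expR (a * sqnorm (U + V z)) <=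
    expR (a * sqnorm U + a * c ^+ 2) * (1 + y z + 2 * b ^+ 2).
  have -> : a * sqnorm (U + V z) = (a * sqnorm U + a * sqnorm (V z)) + y z.
    by rewrite sqnormD /y; ring.
  rewrite expRD; apply: ler_pM; rewrite ?expR_ge0 //.
    rewrite ler_expR lerD2l ler_wpM2l // -eucl_norm_sq.
    by rewrite lerXn2r ?nnegrE ?eucl_norm_ge0.
  have : y z <= 1 / 2 by move: (y_le z); rewrite ler_norml; lra.
  move/expR_le_quad/le_trans; apply.
  rewrite lerD2l ler_wpM2l // -(real_normK (num_real (y z))).
  by rewrite lerXn2r ?nnegrE ?normr_ge0 ?y_le // /b !mulr_ge0.
have y_mean0 : \sum_z p z * y z = 0.
  rewrite /y; under eq_bigr do rewrite mulrCA.
  by rewrite -mulr_sumr -dotp_vmean pV dotp0r mulr0.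
apply: le_trans (ler_sum _ (fun z _ => ler_wpM2l (p0 z) (pointwise z))) _.
set E := expR (a * sqnorm U + a * c ^+ 2).
have -> : \sum_z p z * (E * (1 + y z + 2 * b ^+ 2)) = E * (1 + 2 * b ^+ 2).
  transitivity (E * ((1 + 2 * b ^+ 2) * \sum_z p z + \sum_z p z * y z)).
    rewrite !mulr_sumr -big_split /= mulr_sumr; apply: eq_bigr => z _; ring.
  by rewrite y_mean0 p1 addr0 mulr1.
apply: le_trans (ler_wpM2l (expR_ge0 _) (expR_ge1Dx (2 * b ^+ 2))) _.
rewrite -expRD ler_expR /b !exprMn eucl_norm_sq.
have : 0 <= a ^+ 2 * c ^+ 2 * sqnorm U by rewrite !mulr_ge0 ?sqr_ge0 ?sqnorm_ge0.
nra.
Qed.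

End SqnormMgf.

Section Martingale.
Variables (R : realType) (T : finType) (d : nat).
Variables (Q : T -> T -> R) (g : T -> 'rV[R]_d).
Hypothesis HQ : stochastic Q.

Definition cond_mean z := vmean (Q z) g.

Definition mg_incr z y := g y - cond_mean z.

Fixpoint mg_sum z zs := if zs is y :: zs' then mg_incr z y + mg_sum y zs' else 0.

Lemma mg_incr_mean0 z : vmean (Q z) (mg_incr z) = 0.
Proof.
rewrite /vmean /mg_incr; under eq_bigr do rewrite scalerBr.
by rewrite sumrB -scaler_suml; case: (HQ z) => _ ->; rewrite scale1r subrr.
Qed.

Variable c : R.
Hypothesis incr_le : forall z y, eucl_norm (mg_incr z y) <= c.
Hypothesis c_gt0 : 0 < c.

Section Mgf.
Variables (lam n0 : R).
Hypotheses (lam_gt0 : 0 < lam) (n0_gt0 : 0 < n0).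
Hypothesis lam_small : 32 * lam * c ^+ 2 * n0 <= 1.

Lemma mgf_coef_le (m : R) : 0 <= m <= n0 ->
  let a := lam + m * lam / n0 in
  [/\ 0 <= a, a <= 2 * lam & 8 * a ^+ 2 * c ^+ 2 <= lam / n0].
Proof.
case/andP=> m0 mn0 a.
have q0 : 0 <= m * lam / n0 by rewrite !mulr_ge0 ?invr_ge0 // ltW.
have q_le : m * lam / n0 <= lam.
  by rewrite ler_pdivrMr // mulrC ler_wpM2l // ltW.
have a0 : 0 <= a by rewrite /a; have := lam_gt0; lra.
have a_le : a <= 2 * lam by rewrite /a; lra.
split=> //.
have a2 : a ^+ 2 * c ^+ 2 <= (2 * lam) ^+ 2 * c ^+ 2.
  by rewrite ler_wpM2r ?sqr_ge0 // lerXn2r ?nnegrE // mulr_ge0 // ltW.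
apply: (@le_trans _ _ (lam * (32 * lam * c ^+ 2))); last first.
  by rewrite ler_wpM2l ?(ltW lam_gt0) // -[n0^-1]mul1r ler_pdivlMr.
lra.
Qed.

(* The coefficient of |U|^2 grows by lam / n0 per step while the admissible
   radius |U| <= (n0 - n) c shrinks by c, which keeps 4 a |U| c <= 1. *)
Lemma chainE_mgf n : n%:R <= n0 -> forall U z,
  eucl_norm U <= (n0 - n%:R) * c ->
  chainE Q n z (fun zs => expR (lam * sqnorm (U + mg_sum z zs))) <=
  expR ((lam + n%:R * lam / n0) * sqnorm U + 2 * lam * n%:R * c ^+ 2).
Proof.
elim: n => [|n IH] n_le U z U_le.
  by rewrite /chainE /= mul1r addr0 !(mul0r, mulr0, addr0).
rewrite chainES -natr1 in n_le U_le *.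
have n_le' : n%:R <= n0 by lra.
have [a0 a_le a2_le] := mgf_coef_le (m := n%:R) ltac:(by rewrite ler0n).
set a := lam + n%:R * lam / n0 in a0 a_le a2_le *.
have nc0 : 0 <= n%:R * c by rewrite mulr_ge0 ?ler0n ?ltW.
apply: (@le_trans _ _ (\sum_y Q z y *
   (expR (2 * lam * n%:R * c ^+ 2) * expR (a * sqnorm (U + mg_incr z y))))).
  apply: ler_sum => y _; apply: ler_wpM2l; first by case: (HQ z).
  have -> : (fun zs => expR (lam * sqnorm (U + mg_sum z (y :: zs)))) =
      (fun zs => expR (lam * sqnorm ((U + mg_incr z y) + mg_sum y zs))).
    by apply/funext => zs /=; rewrite addrA.
  apply: le_trans (IH n_le' (U + mg_incr z y) y _) _.
    by apply: le_trans (eucl_normD _ _) _; have := incr_le z y; lra.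
  by rewrite -expRD addrC.
under eq_bigr do rewrite mulrCA.
rewrite -mulr_sumr.
have U_small : 4 * a * eucl_norm U * c <= 1.
  have : eucl_norm U <= n0 * c.
    apply: le_trans U_le _; rewrite ler_wpM2r ?(ltW c_gt0) //.
    by have := ler0n R n; lra.
  move/(ler_pM a0 (eucl_norm_ge0 U) a_le)/(ler_wpM2l (ler0n _ 4)).
  move/(ler_wpM2r (ltW c_gt0)).
  have := lam_small; rewrite !mulrA; lra.
apply: le_trans (ler_wpM2l (expR_ge0 _)
  (mgf_sqnorm_step (HQ z) (mg_incr_mean0 z) (incr_le z) a0 (ltW c_gt0) U_small)) _.
rewrite -expRD ler_expR.
have -> : lam + (n%:R + 1) * lam / n0 = a + lam / n0.
  by rewrite /a; field; exact: lt0r_neq0.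
have := ler_wpM2r (sqnorm_ge0 U) a2_le.
have : a * c ^+ 2 <= 2 * lam * c ^+ 2 by rewrite ler_wpM2r ?sqr_ge0.
lra.
Qed.

End Mgf.

(* Azuma-Hoeffding type tail bound, from Markov's inequality applied to
   exp (lam |M|^2) with lam = 1 / (32 c^2 n0). *)
Lemma chainE_mg_tail n (n0 t : R) z : 0 < n0 -> n%:R <= n0 -> 0 <= t ->
  chainE Q n z (fun zs => (t < eucl_norm (mg_sum z zs))%R%:R) <=
  expR (1 / 16 - t ^+ 2 / (32 * c ^+ 2 * n0)).
Proof.
move=> n0_gt0 n_le t0.
set lam := (32 * c ^+ 2 * n0)^-1.
have lam_gt0 : 0 < lam by rewrite invr_gt0 !mulr_gt0 ?exprn_gt0.
have lam_n0 : 32 * lam * c ^+ 2 * n0 = 1.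
  by rewrite /lam; field; rewrite !lt0r_neq0 ?exprn_gt0.
have indicator_le zs : (t < eucl_norm (mg_sum z zs))%R%:R <=
    expR (- (lam * t ^+ 2)) * expR (lam * sqnorm (0 + mg_sum z zs)).
  rewrite add0r -expRD; case: ltP => [t_lt|]; last by rewrite expR_ge0.
  have : t ^+ 2 <= sqnorm (mg_sum z zs).
    by rewrite -eucl_norm_sq lerXn2r ?nnegrE ?eucl_norm_ge0 // ltW.
  move/(ler_wpM2l (ltW lam_gt0)) => ?.
  by apply: le_trans (expR_ge1Dx _); rewrite /= mulr1n; lra.
apply: le_trans (ler_chainE _ _ HQ indicator_le) _.
rewrite chainEZ.
apply: le_trans (ler_wpM2l (expR_ge0 _)
  (chainE_mgf lam_gt0 n0_gt0 _ n_le z (U := 0) _)) _.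
- by rewrite lam_n0.
- by rewrite eucl_norm0 mulr_ge0 ?subr_ge0 // ltW.
rewrite sqnorm0 mulr0 add0r -expRD ler_expR.
have : 2 * lam * n%:R * c ^+ 2 <= 2 * lam * n0 * c ^+ 2.
  by rewrite ler_wpM2r ?sqr_ge0 // ler_wpM2l // mulr_ge0 // ltW.
by rewrite [lam * t ^+ 2]mulrC; lra.
Qed.

End Martingale.

Section TotalVariation.
Variables (R : realType) (T : finType).
Implicit Types p q : T -> R.

Lemma dmix_ge0 (P : T -> T -> R) mu s : 0 <= dmix P mu s.
Proof. exact: bigmax_ge_id. Qed.

Lemma tv_le_dmix (P : T -> T -> R) mu s z : tv (Ppow P s z) mu <= dmix P mu s.
Proof. exact: (le_bigmax 0 (fun z => tv (Ppow P s z) mu)). Qed.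

Lemma sum_abs_le_tv p q : \sum_y p y = 1 -> \sum_y q y = 1 ->
  \sum_y `|p y - q y| <= 2 * tv p q.
Proof.
move=> p1 q1; set A := [set y | q y < p y].
have tvA : `|\sum_(x in A) p x - \sum_(x in A) q x| <= tv p q.
  exact: (le_bigmax 0 (fun A : {set T} => `|\sum_(x in A) p x - \sum_(x in A) q x|)).
have sum_in : \sum_(y in A) `|p y - q y| = \sum_(y in A) (p y - q y).
  by apply: eq_bigr => y; rewrite inE => /ltW; rewrite -subr_ge0 => /ger0_norm.
have sum_out : \sum_(y | y \notin A) `|p y - q y| = \sum_(y in A) (p y - q y).
  have : \sum_y (p y - q y) = 0 by rewrite sumrB p1 q1 subrr.
  rewrite (bigID (mem A)) /= => /eqP; rewrite addr_eq0 => /eqP ->.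
  rewrite -sumrN; apply: eq_bigr => y; rewrite inE -leNgt => qp.
  by rewrite ler0_norm ?subr_le0.
rewrite (bigID (mem A)) /= sum_in sum_out sumrB.
by move: (ler_norm (\sum_(x in A) p x - \sum_(x in A) q x)); lra.
Qed.

Variable d : nat.

Lemma eucl_norm_vmeanB_le p q (g : T -> 'rV[R]_d) G :
  is_distr p -> is_distr q -> 0 <= G ->
  (forall z, eucl_norm (g z) <= G) ->
  eucl_norm (vmean p g - vmean q g) <= 2 * tv p q * G.
Proof.
move=> [_ p1] [_ q1] G0 gG.
have -> : vmean p g - vmean q g = \sum_y (p y - q y) *: g y.
  by rewrite -sumrB; apply: eq_bigr => y _; rewrite scalerBl.
apply: le_trans (eucl_norm_comb_le _ gG) _.
by rewrite ler_wpM2r ?sum_abs_le_tv.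
Qed.

End TotalVariation.

Lemma sqrt_threshold_le (R : realType) (a x L : R) : 0 <= a -> 0 <= x -> 0 <= L ->
  Num.sqrt (128 * a ^+ 2 * x * (L + 1 / 16)) <= 12 * a * Num.sqrt x * (1 + Num.sqrt L).
Proof.
move=> a0 x0 L0; set sx := Num.sqrt x; set sL := Num.sqrt L.
have [sx0 sL0] : 0 <= sx /\ 0 <= sL by split; apply: sqrtr_ge0.
rewrite -(ler_pXn2r (n := 2)) ?nnegrE ?sqrtr_ge0 ?mulr_ge0 ?addr_ge0 //.
rewrite sqr_sqrtr ?mulr_ge0 ?addr_ge0 ?sqr_ge0 //.
rewrite -[x](sqr_sqrtr x0) -[L](sqr_sqrtr L0) -/sx -/sL.
rewrite -subr_ge0.
have -> : (12 * a * sx * (1 + sL)) ^+ 2 - 128 * a ^+ 2 * sx ^+ 2 * (sL ^+ 2 + 1 / 16) =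
    (a * sx) ^+ 2 * (136 + 288 * sL + 16 * sL ^+ 2) by field.
by rewrite mulr_ge0 ?sqr_ge0 // !addr_ge0 ?mulr_ge0 ?sqr_ge0.
Qed.

Definition dev_level (R : realType) (G : R) (K N : nat) (delta : R) : R :=
  12 * G * Num.sqrt (K%:R / N%:R) * (1 + Num.sqrt (ln (K%:R / delta)))
  + 6 * G * K%:R / N%:R.

Lemma le_dev_level (R : realType) (G : R) (K N : nat) (d1 d2 : R) :
  0 <= G -> (0 < K)%N -> 0 < d1 -> d1 <= d2 ->
  dev_level G K N d2 <= dev_level G K N d1.
Proof.
move=> G0 K_gt0 d1_gt0 d12; have d2_gt0 := lt_le_trans d1_gt0 d12.
have K_gt0R : 0 < K%:R :> R by rewrite ltr0n.
rewrite lerD2r ler_wpM2l ?mulr_ge0 ?sqrtr_ge0 // lerD2l ler_wsqrtr //.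
by rewrite ler_ln ?posrE ?divr_gt0 // ler_pM2l // lef_pV2.
Qed.

Section Concentration.
Variables (R : realType) (T : finType) (P : T -> T -> R) (nu mu : T -> R).
Hypotheses (HP : stochastic P) (Hnu : is_distr nu) (Hmu : is_distr mu).
Variables (d : nat) (g : T -> 'rV[R]_d) (G : R).
Hypotheses (g_le : forall z, eucl_norm (g z) <= G) (G_gt0 : 0 < G).
Variables (K N : nat) (delta : R) (z0 : T).
Hypotheses (K_gt0 : (0 < K)%N) (KN : (2 * K <= N)%N).
Hypotheses (dmix_lt : N%:R * dmix P mu K < delta) (delta_lt1 : delta < 1).

Local Notation Q := (Ppow P K).
Local Notation gbar := (vmean mu g).
Local Notation dm := (dmix P mu K).

Let n0 : R := N%:R / K%:R.

Let thr := Num.sqrt (32 * (2 * G) ^+ 2 * n0 * (ln (K%:R / delta) + 1 / 16)).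

(* Position r + j K, j <= nr r, runs over the residue class of r in [0, N). *)
Let nr r := ((N.-1 - r) %/ K)%N.

Let class_mg r s :=
  if subsample K r (nr r) s is y :: ys then mg_sum Q g y ys else 0.

Let G_ge0 : 0 <= G. Proof. exact: ltW. Qed.
Let K_gt0R : 0 < K%:R :> R. Proof. by rewrite ltr0n. Qed.
Let N_gt0R : 0 < N%:R :> R. Proof. by rewrite ltr0n; lia. Qed.
Let n0_gt0 : 0 < n0. Proof. exact: divr_gt0. Qed.

Let delta_gt0 : 0 < delta.
Proof. by apply: le_lt_trans dmix_lt; rewrite mulr_ge0 ?ler0n ?dmix_ge0. Qed.

Let log_ge0 : 0 <= ln (K%:R / delta).
Proof.
rewrite ln_ge0 // ler_pdivlMr // mul1r.
by apply: le_trans (ltW delta_lt1) _; rewrite ler1n.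
Qed.

Let thr_ge0 : 0 <= thr. Proof. exact: sqrtr_ge0. Qed.

Let nr_le r : (nr r)%:R <= n0.
Proof.
rewrite /n0 ler_pdivlMr // -natrM ler_nat /nr.
by have := leq_divM (N.-1 - r) K; lia.
Qed.

Let incr_le z y : eucl_norm (mg_incr Q g z y) <= 2 * G.
Proof.
apply: le_trans (eucl_normD _ _) _; rewrite eucl_normN mulr2n mulrDl mul1r.
by rewrite lerD // (eucl_norm_vmean_le (stochastic_Ppow HP K z)).
Qed.

Let tail_at_thr : expR (1 / 16 - thr ^+ 2 / (32 * (2 * G) ^+ 2 * n0)) = delta / K%:R.
Proof.
rewrite sqr_sqrtr; last first.
  by rewrite !mulr_ge0 ?sqr_ge0 ?addr_ge0 ?(ltW n0_gt0).
have -> : 1 / 16 - 32 * (2 * G) ^+ 2 * n0 * (ln (K%:R / delta) + 1 / 16) /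
    (32 * (2 * G) ^+ 2 * n0) = - ln (K%:R / delta).
  by field; rewrite !lt0r_neq0.
by rewrite expRN lnK ?invf_div // posrE divr_gt0.
Qed.

Let threshold_le : (K%:R * thr + 4 * G * K%:R) / N%:R <= dev_level G K N delta.
Proof.
have KN_ge0 : 0 <= K%:R / N%:R :> R by rewrite divr_ge0 ?ler0n.
rewrite /dev_level mulrDl; apply: lerD; last first.
  by rewrite !ler_wpM2r ?invr_ge0 ?ler0n //; have := G_gt0; lra.
rewrite mulrAC -{1}[K%:R / N%:R]ger0_norm // -sqrtr_sqr -sqrtrM ?sqr_ge0 //.
have -> : (K%:R / N%:R) ^+ 2 * (32 * (2 * G) ^+ 2 * n0 * (ln (K%:R / delta) + 1 / 16))
    = 128 * G ^+ 2 * (K%:R / N%:R) * (ln (K%:R / delta) + 1 / 16).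
  by rewrite /n0; field; rewrite !lt0r_neq0.
exact: sqrt_threshold_le G_ge0 KN_ge0 log_ge0.
Qed.

Lemma class_mg_tail r : (r < K)%N ->
  sumseq N (fun s => path_prob nu P s * (thr < eucl_norm (class_mg r s))%R%:R)
  <= delta / K%:R.
Proof.
move=> rK.
have N_split : N = (r + (nr r * K + (N.-1 - r - nr r * K))).+1.
  by rewrite /nr; have := leq_divM (N.-1 - r) K; lia.
pose H l : R := (thr < eucl_norm (if l is y :: ys then mg_sum Q g y ys else 0))%R%:R.
rewrite {1}N_split (sumseq_subsample K HP nu _ _ _ H) /H /=.
have chain_le y : chainE Q (nr r) y
    (fun zs => (thr < eucl_norm (mg_sum Q g y zs))%R%:R) <= delta / K%:R.
  rewrite -tail_at_thr; apply: (chainE_mg_tail (stochastic_Ppow HP K) incr_le) => //.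
  by rewrite mulr_gt0 ?ltr0n.
apply: (@le_trans _ _ (\sum_x nu x * \sum_y Ppow P r x y * (delta / K%:R))).
  apply: ler_sum => x _; apply: ler_wpM2l; first by case: Hnu.
  apply: ler_sum => y _; apply: ler_wpM2l; first by case: (stochastic_Ppow HP r x).
  exact: chain_le.
under eq_bigr => x _ do rewrite -mulr_suml (proj2 (stochastic_Ppow HP r x)) mul1r.
by rewrite -mulr_suml; case: Hnu => _ ->; rewrite mul1r.
Qed.

Fixpoint bias_sum (z : T) (zs : seq T) : 'rV[R]_d :=
  if zs is y :: zs' then (cond_mean Q g z - gbar) + bias_sum y zs' else 0.

Lemma sum_dev_decomp z zs :
  \sum_(y <- zs) (g y - gbar) = mg_sum Q g z zs + bias_sum z zs.
Proof.
elim: zs z => [|y zs IH] z /=; first by rewrite big_nil addr0.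
by rewrite big_cons (IH y) /mg_incr; apply/matrixP => i j; rewrite !mxE; ring.
Qed.

Lemma bias_sum_le z zs : eucl_norm (bias_sum z zs) <= (size zs)%:R * (2 * G * dm).
Proof.
elim: zs z => [|y zs IH] z /=; first by rewrite eucl_norm0 mul0r.
apply: le_trans (eucl_normD _ _) _; rewrite -natr1 mulrDl mul1r addrC lerD //.
apply: le_trans (eucl_norm_vmeanB_le (stochastic_Ppow HP K z) Hmu G_ge0 g_le) _.
by rewrite mulrAC ler_wpM2l ?mulr_ge0 ?tv_le_dmix.
Qed.

Lemma class_sum_le r s : size s = N -> (r < K)%N ->
  eucl_norm (\sum_(j < (nr r).+1) (g (nth z0 s (r + j * K)) - gbar))
  <= 2 * G + eucl_norm (class_mg r s) + (nr r)%:R * (2 * G * dm).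
Proof.
move=> size_s rK.
have r_lt : (r + nr r * K < size s)%N.
  by rewrite size_s /nr; have := leq_divM (N.-1 - r) K; lia.
have sub_eq := subsample_nth K_gt0 z0 r_lt.
rewrite -(big_mkord xpredT (fun j => g (nth z0 s (r + j * K)) - gbar)).
rewrite /index_iota subn0 -(big_map _ xpredT (fun y => g y - gbar)) -sub_eq.
rewrite /class_mg; case E : subsample => [|y ys].
  by rewrite big_nil eucl_norm0 !addr_ge0 ?mulr_ge0 ?ler0n ?dmix_ge0 ?eucl_norm_ge0.
have size_ys : size ys = nr r.
  by move: E; rewrite sub_eq => /(congr1 size); rewrite size_map size_iota => -[].
rewrite big_cons (sum_dev_decomp y) addrA.
apply: le_trans (eucl_normD _ _) _; rewrite -size_ys lerD ?bias_sum_le //.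
apply: le_trans (eucl_normD _ _) _; rewrite lerD2r.
apply: le_trans (eucl_normD _ _) _; rewrite eucl_normN mulr2n mulrDl mul1r.
by rewrite lerD ?eucl_norm_vmean_le.
Qed.

Lemma avg_dev_le s : size s = N ->
  (forall r : 'I_K, eucl_norm (class_mg r s) <= thr) ->
  eucl_norm (N%:R^-1 *: \sum_(i < N) g (nth z0 s i) - gbar)
  <= (K%:R * thr + 4 * G * K%:R) / N%:R.
Proof.
move=> size_s class_le.
have -> : N%:R^-1 *: \sum_(i < N) g (nth z0 s i) - gbar =
    N%:R^-1 *: \sum_(i < N) (g (nth z0 s i) - gbar).
  rewrite sumrB sumr_const card_ord scalerBr -(scaler_nat N gbar) scalerA.
  by rewrite mulVf ?scale1r // lt0r_neq0.
rewrite eucl_normZ ger0_norm ?invr_ge0 ?ler0n // mulrC ler_pM2r ?invr_gt0 //.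
rewrite (@sum_ord_residues _ N K (fun i => g (nth z0 s i) - gbar)); last first.
  by rewrite K_gt0; lia.
apply: le_trans (eucl_norm_sum _ _ _) _.
apply: (@le_trans _ _ (\sum_(r < K) (2 * G + thr + n0 * (2 * G * dm)))).
  apply: ler_sum => r _; apply: le_trans (class_sum_le size_s (ltn_ord r)) _.
  rewrite lerD ?lerD2l ?class_le // ler_wpM2r ?nr_le //.
  by rewrite !mulr_ge0 ?dmix_ge0.
have bias_le : N%:R * (2 * G * dm) <= 2 * G * K%:R.
  rewrite mulrCA ler_wpM2l ?mulr_ge0 //.
  by apply: le_trans (ltW dmix_lt) _; apply: le_trans (ltW delta_lt1) _; rewrite ler1n.
rewrite sumr_const card_ord -[(_ + _) *+ K]mulr_natl mulrDr mulrA.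
rewrite (_ : K%:R * n0 = N%:R); last by rewrite /n0 mulrCA mulfV ?mulr1 // lt0r_neq0.
suff -> : K%:R * (2 * G + thr) = K%:R * thr + 2 * G * K%:R by lra.
by ring.
Qed.

Lemma avg_dev_tail B : dev_level G K N delta <= B ->
  sumseq N (fun s => path_prob nu P s *
    (B < eucl_norm (N%:R^-1 *: \sum_(i < N) g (nth z0 s i) - gbar))%R%:R) <= delta.
Proof.
move=> /(le_trans threshold_le) B_ge.
apply: (@le_trans _ _ (sumseq N (fun s =>
    \sum_(r < K) path_prob nu P s * (thr < eucl_norm (class_mg r s))%R%:R))).
  apply: ler_sumseq => s size_s; rewrite -mulr_sumr ler_wpM2l ?path_prob_ge0 //.
  have [r class_gt|class_le] := pickP (fun r : 'I_K => thr < eucl_norm (class_mg r s)).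
    rewrite (bigD1 r) //= class_gt /= -[X in X <= _]addr0 lerD ?ler_nat ?leq_b1 //.
    by apply: sumr_ge0 => i _; rewrite ler0n.
  rewrite ltNge (le_trans (avg_dev_le size_s _) B_ge) ?sumr_ge0 // => r.
  by rewrite leNgt; apply/negP => r_gt; have := class_le r; rewrite /= r_gt.
rewrite sumseq_sumr.
apply: le_trans (ler_sum _ (fun r _ => class_mg_tail (ltn_ord r))) _.
by rewrite sumr_const card_ord -[(_ / _) *+ K]mulr_natr divfK // lt0r_neq0.
Qed.

End Concentration.

Lemma eucl_norm_avg_le (R : realType) d N (v : 'I_N -> 'rV[R]_d) G : (0 < N)%N ->
  (forall i, eucl_norm (v i) <= G) -> eucl_norm (N%:R^-1 *: \sum_(i < N) v i) <= G.
Proof.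
move=> N_gt0 vG; rewrite eucl_normZ ger0_norm ?invr_ge0 ?ler0n // ler_pdivrMl ?ltr0n //.
apply: le_trans (eucl_norm_sum _ _ _) _.
apply: le_trans (ler_sum _ (fun i _ => vG i)) _.
by rewrite sumr_const card_ord mulr_natl.
Qed.

Lemma markov_avg_dev_tail (R : realType) (T : finType) (P : T -> T -> R)
    (nu mu : T -> R) d (g : T -> 'rV[R]_d) (G : R) (K N : nat) (delta B : R) (z0 : T) :
  stochastic P -> is_distr nu -> is_distr mu -> (forall z, eucl_norm (g z) <= G) ->
  (0 < K)%N -> (2 * K <= N)%N -> N%:R * dmix P mu K < delta ->
  dev_level G K N delta <= B ->
  sumseq N (fun s => path_prob nu P s *
    (B < eucl_norm (N%:R^-1 *: \sum_(i < N) g (nth z0 s i) - vmean mu g))%R%:R)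
  <= delta.
Proof.
move=> HP Hnu Hmu g_le K_gt0 KN dmix_lt B_ge.
have N_gt0 : (0 < N)%N by lia.
have [delta_ge1|delta_lt1] := leP 1 delta.
  apply: le_trans delta_ge1; apply: (@le_trans _ _ (sumseq N (path_prob nu P))).
    apply: ler_sumseq => s _; rewrite ler_piMr ?path_prob_ge0 //.
    by rewrite lern1 leq_b1.
  by rewrite -(prednK N_gt0) sumseq_path_prob.
have G_ge0 : 0 <= G by apply: le_trans (g_le z0); exact: eucl_norm_ge0.
have [G0|G_neq0] := eqVneq G 0; last first.
  have G_gt0 : 0 < G by rewrite lt0r G_neq0.
  exact: (avg_dev_tail HP Hnu Hmu g_le G_gt0 z0 K_gt0 KN dmix_lt delta_lt1 B_ge).
have dev_le s : eucl_norm (N%:R^-1 *: \sum_(i < N) g (nth z0 s i) - vmean mu g) <= B.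
  apply: le_trans (eucl_normD _ _) _; rewrite eucl_normN.
  apply: le_trans (lerD (eucl_norm_avg_le N_gt0 (fun i => g_le (nth z0 s i)))
                        (eucl_norm_vmean_le Hmu g_le)) _.
  by move: B_ge; rewrite /dev_level G0 !(mul0r, mulr0, addr0).
rewrite (eq_sumseq (H := fun s => 0 * path_prob nu P s)) => [|s _]; last first.
  by rewrite ltNge dev_le mulr0 mul0r.
by rewrite sumseqZ mul0r; apply: le_trans (ltW dmix_lt); rewrite mulr_ge0 ?dmix_ge0.
Qed.

Lemma distr_inhabited (R : realType) (T : finType) (p : T -> R) :
  is_distr p -> inhabited T.
Proof.
case=> _ p1; have [z _|none] := pickP (@predT T); first exact: inhabits z.
by move: p1; rewrite big_pred0 // => /esym/eqP; rewrite oner_eq0.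
Qed.

Lemma compl_sum_le (R : realType) (T : finType) (p : T -> R) (A : pred T) delta :
  \sum_x p x = 1 -> \sum_(x | ~~ A x) p x <= delta -> 1 - delta <= \sum_(x | A x) p x.
Proof. by move=> p1 h; rewrite -p1 (bigID A) /=; lra. Qed.

Lemma markov_avg_dev_prob (R : realType) (T : finType) (P : T -> T -> R)
    (nu mu : T -> R) d (g : T -> 'rV[R]_d) (G : R) (K N : nat) (delta B : R) :
  stochastic P -> is_distr nu -> is_distr mu -> (forall z, eucl_norm (g z) <= G) ->
  (0 < K)%N -> (2 * K <= N)%N -> N%:R * dmix P mu K < delta ->
  dev_level G K N delta <= B ->
  1 - delta <= \sum_(y : N.-tuple T |
      eucl_norm (N%:R^-1 *: \sum_(i < N) g (tnth y i) - vmean mu g) <= B)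
    path_prob nu P y.
Proof.
move=> HP Hnu Hmu g_le K_gt0 KN dmix_lt B_ge.
have [z0] := distr_inhabited Hmu.
pose dev (s : seq T) := eucl_norm (N%:R^-1 *: \sum_(i < N) g (nth z0 s i) - vmean mu g).
apply: (@compl_sum_le _ _ (fun y : N.-tuple T => path_prob nu P y)).
  by rewrite sum_tuple_sumseq -(prednK (_ : 0 < N)%N) ?sumseq_path_prob //; lia.
rewrite big_mkcond.
rewrite (eq_bigr (fun y : N.-tuple T => path_prob nu P y * (B < dev y)%R%:R)).
  rewrite (sum_tuple_sumseq N (fun s => path_prob nu P s * (B < dev s)%R%:R)).
  exact: markov_avg_dev_tail HP Hnu Hmu g_le K_gt0 KN dmix_lt B_ge.
move=> y _; rewrite /dev -(eq_bigr _ (fun i _ => congr1 g (tnth_nth z0 y i))).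
by case: leP; rewrite ?mulr0 ?mulr1.
Qed.

Lemma condP_next_law (R : realType) (T : finType) (mu0 : T -> R) (P : T -> T -> R)
    ns xs N (A : N.-tuple T -> bool) :
  0 < pNs R ns * path_prob mu0 P xs ->
  condP mu0 P ns xs A = \sum_(y : N.-tuple T | A y) path_prob (next_law P mu0 xs) P y.
Proof.
move=> atom_gt0; rewrite /condP; under eq_bigr do rewrite path_prob_cat.
by rewrite -mulr_sumr mulrA mulrC mulrA mulVf ?mul1r // lt0r_neq0.
Qed.

Section Gradient.
Variables (R : realType) (d : nat).

Lemma dotp_delta_mx (u : 'rV[R]_d) j : dotp u (delta_mx ord0 j) = u ord0 j.
Proof.
rewrite /dotp (bigD1 j) //= big1 ?addr0; first by rewrite mxE !eqxx mulr1.
by move=> k /negbTE k_neq; rewrite mxE k_neq andbF mulr0.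
Qed.

Lemma diff_wsum (T : Type) (mu : T -> R) (f : T -> 'rV[R]_d -> R) w (l : seq T) :
  (forall z, differentiable (f z) w) ->
  differentiable (fun x => \sum_(z <- l) mu z * f z x) w /\
  forall v, 'd (fun x => \sum_(z <- l) mu z * f z x) w v =
            \sum_(z <- l) mu z * 'd (f z) w v.
Proof.
move=> df; elim: l => [|a l [IHd IHe]].
  have -> : (fun x : 'rV[R]_d => \sum_(z <- [::]) mu z * f z x) = cst 0.
    by apply/funext => x; rewrite big_nil.
  split=> [|v]; first exact: differentiable_cst.
  by rewrite diff_cst big_nil.
have -> : (fun x => \sum_(z <- a :: l) mu z * f z x) =
    (mu a *: f a) + (fun x => \sum_(z <- l) mu z * f z x).
  by apply/funext => x; rewrite big_cons.
have dZ : differentiable (mu a *: f a) w by exact: differentiableZ.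
split=> [|v]; first exact: differentiableD.
by rewrite diffD //= diffZ // big_cons IHe.
Qed.

Lemma grad_Fpop (T : finType) (mu : T -> R) (f : T -> 'rV[R]_d -> R)
    (gradf : T -> 'rV[R]_d) (gradF : 'rV[R]_d) w :
  (forall z, differentiable (f z) w /\ forall v, 'd (f z) w v = dotp (gradf z) v) ->
  (forall v, 'd (Fpop mu f) w v = dotp gradF v) ->
  gradF = vmean mu gradf.
Proof.
move=> Hf HF; have [_ dsum] := diff_wsum mu (index_enum T) (fun z => (Hf z).1).
apply/matrixP => i j; rewrite (ord1 i) -dotp_delta_mx -HF [Fpop mu f]/= dsum.
rewrite /vmean summxE; apply: eq_bigr => z _.
by rewrite (Hf z).2 dotp_delta_mx mxE.
Qed.

End Gradient.

Theorem lemmaA5 (R : realType) (Omega : finType) (P : Omega -> Omega -> R)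
  (mu0 mu : Omega -> R) (d : nat) (Kset : set 'rV[R]_d)
  (f : Omega -> 'rV[R]_d -> R) (gradf : Omega -> 'rV[R]_d -> 'rV[R]_d)
  (gradF : 'rV[R]_d -> 'rV[R]_d) (G : R) (K N : nat) :
  stochastic P -> ergodic P -> is_distr mu0 -> stationary P mu ->
  (forall z w, differentiable (f z) w /\
     forall v, 'd (f z) w v = dotp (gradf z w) v) ->
  (forall w, differentiable (Fpop mu f) w /\
     forall v, 'd (Fpop mu f) w v = dotp (gradF w) v) ->
  (forall w z, Kset w -> eucl_norm (gradf z w) <= G) ->
  (1 <= K)%N -> (2 * K <= N)%N ->
  forall (delta : R), N%:R * dmix P mu K < delta ->
  forall (t : nat) (wt : seq nat -> seq Omega -> 'rV[R]_d),
  (1 <= t)%N ->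
  (forall ns xs, Kset (wt ns xs)) ->
  forall (ns : seq nat) (xs : seq Omega),
  size ns = t.-1 -> size xs = sumn ns ->
  0 < pNs R ns * path_prob mu0 P xs ->
  let deltat := delta - N%:R * dmix P mu K in
  let w := wt ns xs in
  1 - delta <=
  condP mu0 P ns xs
    (fun y : N.-tuple Omega =>
       eucl_norm (N%:R^-1 *: (\sum_(i < N) gradf (tnth y i) w) - gradF w)
       <= 12 * G * Num.sqrt (K%:R / N%:R) * (1 + Num.sqrt (ln (K%:R / deltat)))
          + 6 * G * K%:R / N%:R).
Proof.
move=> HP _ Hmu0 [Hmu _] Hf HF HG K_gt0 KN delta dmix_lt t wt _ wt_in ns xs _ _.
move=> atom_gt0 /=.
set w := wt ns xs.
rewrite condP_next_law // (grad_Fpop (fun z => Hf z w) (HF w).2).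
have g_le z : eucl_norm (gradf z w) <= G := HG w z (wt_in ns xs).
have G_ge0 : 0 <= G.
  by case: (distr_inhabited Hmu) => z; apply: le_trans (eucl_norm_ge0 _) (g_le z).
apply: (markov_avg_dev_prob HP (next_law_distr HP xs Hmu0) Hmu g_le K_gt0 KN dmix_lt).
apply: le_dev_level => //; first by rewrite subr_gt0.
by rewrite lerBlDr lerDl mulr_ge0 ?ler0n ?dmix_ge0.
Qed.
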